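(* Let $p$ be a prime, $R=\mathbb{Z}_p[[\zeta]]$ the formal power series ring in one variable over the $p$-adic integers, and $M=R^{(m)}$ a free $R$-module of rank $m\geq 1$. Let $K$ be an $R$-submodule of $M$ such that (1) $M/(K+M\zeta)\cong\mathbb{Z}_p^{(m)}$, and (2) for all $a\in M$, if $a\zeta\in K$ then $a\in K$. Then $K=0$.
   Context: $\mathbb{Z}_p^{(m)}$ denotes the free $\mathbb{Z}_p$-module of rank $m$; the isomorphism in (1) is as $\mathbb{Z}_p$-modules. *)

From mathcomp Require Import all_boot.
Set Implicit Arguments. Unset Strict Implicit. Unset Printing Implicit Defensive.

(* An element of Z_p is represented by its sequence of p-adic digits:
   x = \sum_i x_i p^i with 0 <= x_i < p.  This representation is unique, so
   Leibniz equality of digit functions is equality in Z_p.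
   The digit type is 'I_p.-1.+1, which is 'I_p for p prime (p > 0). *)
Definition digit (p : nat) := 'I_p.-1.+1.
Definition Zp (p : nat) := nat -> digit p.

Definition zp_trunc p (x : Zp p) (n : nat) : nat := \sum_(i < n) x i * p ^ i.

(* the element whose truncation mod p^n is (t n mod p^n), for a coherent
   family t (t (n.+1) = t n mod p^n); digit n = (t n.+1 mod p^n.+1) / p^n *)
Definition zp_of_trunc p (t : nat -> nat) : Zp p :=
  fun n => inord ((t n.+1 %% p ^ n.+1) %/ p ^ n).

Definition zp0 p : Zp p := fun _ => ord0.
Definition zp1 p : Zp p := zp_of_trunc p (fun _ => 1).
Arguments zp0 p : clear implicits.
Arguments zp1 p : clear implicits.
Definition zp_add p (x y : Zp p) : Zp p :=
  zp_of_trunc p (fun n => zp_trunc x n + zp_trunc y n).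
Definition zp_opp p (x : Zp p) : Zp p :=
  zp_of_trunc p (fun n => p ^ n - zp_trunc x n).
Definition zp_mul p (x y : Zp p) : Zp p :=
  zp_of_trunc p (fun n => zp_trunc x n * zp_trunc y n).

Definition PS (p : nat) := nat -> Zp p.
Definition ps0 p : PS p := fun _ => zp0 p.
Arguments ps0 p : clear implicits.
Definition ps_add p (f g : PS p) : PS p := fun k => zp_add (f k) (g k).
(* Cauchy product: coefficient k is \sum_{i<=k} f_i g_{k-i} in Z_p *)
Definition ps_mul p (f g : PS p) : PS p := fun k =>
  zp_of_trunc p (fun n => \sum_(i < k.+1) zp_trunc (f i) n * zp_trunc (g (k - i)) n).
Definition ps_const p (c : Zp p) : PS p := fun k => if k == 0 then c else zp0 p.
Definition ps_zeta p : PS p := fun k => if k == 1 then zp1 p else zp0 p.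
Arguments ps_zeta p : clear implicits.

Definition FreeR (p m : nat) := 'I_m -> PS p.
Definition M0 p m : FreeR p m := fun _ => ps0 p.
Arguments M0 p m : clear implicits.
Definition M_add p m (a b : FreeR p m) : FreeR p m := fun j => ps_add (a j) (b j).
Definition M_scale p m (r : PS p) (a : FreeR p m) : FreeR p m :=
  fun j => ps_mul r (a j).
Definition M_zeta p m (a : FreeR p m) : FreeR p m :=
  fun j => ps_mul (a j) (ps_zeta p).
Definition M_zpscale p m (c : Zp p) (a : FreeR p m) : FreeR p m :=
  M_scale (ps_const c) a.

Definition FreeZp (p m : nat) := 'I_m -> Zp p.
Definition V0 p m : FreeZp p m := fun _ => zp0 p.
Arguments V0 p m : clear implicits.
Definition V_add p m (u v : FreeZp p m) : FreeZp p m := fun j => zp_add (u j) (v j).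
Definition V_scale p m (c : Zp p) (u : FreeZp p m) : FreeZp p m :=
  fun j => zp_mul c (u j).

Definition is_Rsubmodule p m (K : FreeR p m -> Prop) : Prop :=
  [/\ K (M0 p m),
      (forall a b, K a -> K b -> K (M_add a b)) &
      (forall r a, K a -> K (M_scale r a))].

Definition in_K_plus_Mzeta p m (K : FreeR p m -> Prop) (a : FreeR p m) : Prop :=
  exists k b, K k /\ a = M_add k (M_zeta b).

(* M/(K + M zeta) is isomorphic to Z_p^(m) as Z_p-modules, i.e. (first
   isomorphism theorem) there is a surjective Z_p-linear map M -> Z_p^(m)
   whose kernel is exactly K + M zeta. *)
Definition quotient_iso_Zpm p m (K : FreeR p m -> Prop) : Prop :=
  exists phi : FreeR p m -> FreeZp p m,
    [/\ (forall a b, phi (M_add a b) = V_add (phi a) (phi b)),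
        (forall c a, phi (M_zpscale c a) = V_scale c (phi a)),
        (forall v, exists a, phi a = v) &
        (forall a, phi a = V0 p m <-> in_K_plus_Mzeta K a)].

(* The constant-term map identifies M/(M zeta) with Z_p^(m), and the given
   isomorphism M/(K + M zeta) ~ Z_p^(m) then induces a surjective Z_p-linear
   endomorphism of Z_p^(m) whose kernel is the image of K.  Surjective linear
   endomorphisms of a free module of finite rank over a commutative ring are
   injective (a left inverse of a square matrix is a right inverse), so every
   element of K has constant term 0, i.e. K is contained in M zeta.  Since K is
   closed under division by zeta, the coefficients of an element of K vanish
   one after the other. *)

From Pilot Require Import Defs.
From HB Require Import structures.
From mathcomp Require Import all_boot ssralg matrix boolp.
From mathcomp Require zmodp.
(* Only the ring structure of ['I_n.+1] is needed; zmodp's [Zp] would shadow Defs. *)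
Import (canonicals) zmodp.
Set Implicit Arguments. Unset Strict Implicit. Unset Printing Implicit Defensive.

Import GRing.Theory.

Section ZpTruncations.
Variable p : nat.
Hypothesis p_gt0 : 0 < p.

Lemma digit_ltp (d : digit p) : d < p.
Proof. by rewrite -[p in _ < p](prednK p_gt0). Qed.

Lemma expp_gt0 n : 0 < p ^ n.
Proof. by rewrite expn_gt0 p_gt0. Qed.

Lemma zp_trunc0 (x : Zp p) : zp_trunc x 0 = 0.
Proof. by rewrite /zp_trunc big_ord0. Qed.

Lemma zp_truncS (x : Zp p) n : zp_trunc x n.+1 = zp_trunc x n + x n * p ^ n.
Proof. by rewrite /zp_trunc big_ord_recr. Qed.

Lemma zp_trunc_ltn (x : Zp p) n : zp_trunc x n < p ^ n.
Proof.
elim: n => [|n IHn]; first by rewrite zp_trunc0 expn0.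
rewrite zp_truncS expnS; apply: (@leq_trans ((x n).+1 * p ^ n)).
  by rewrite mulSn ltn_add2r.
by rewrite leq_mul2r digit_ltp orbT.
Qed.

Lemma zp_trunc_modn (x : Zp p) n : zp_trunc x n %% p ^ n = zp_trunc x n.
Proof. by rewrite modn_small ?zp_trunc_ltn. Qed.

Lemma zp_trunc_inj (x y : Zp p) :
  (forall n, zp_trunc x n = zp_trunc y n %[mod p ^ n]) -> x = y.
Proof.
move=> eq_xy; apply/funext => n; apply: val_inj => /=.
have := eq_xy n.+1; rewrite !zp_trunc_modn !zp_truncS.
have := eq_xy n; rewrite !zp_trunc_modn => ->.
by move/eqP; rewrite eqn_add2l eqn_pmul2r ?expp_gt0 // => /eqP.
Qed.

Definition coherent (t : nat -> nat) := forall n, t n.+1 = t n %[mod p ^ n].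

Lemma coherent_trunc (x : Zp p) : coherent (zp_trunc x).
Proof. by move=> n; rewrite zp_truncS addnC modnMDl. Qed.

Lemma coherentD t t' : coherent t -> coherent t' -> coherent (fun n => t n + t' n).
Proof. by move=> ht ht' n; rewrite -modnDm ht ht' modnDm. Qed.

Lemma coherentM t t' : coherent t -> coherent t' -> coherent (fun n => t n * t' n).
Proof. by move=> ht ht' n; rewrite -modnMm ht ht' modnMm. Qed.

Lemma zp_trunc_of t : coherent t -> forall n, zp_trunc (zp_of_trunc p t) n = t n %% p ^ n.
Proof.
move=> ht; elim=> [|n IHn]; first by rewrite zp_trunc0 expn0 modn1.
rewrite zp_truncS IHn /zp_of_trunc /=.
set a := t n.+1 %% p ^ n.+1.
have a_lt : a < p ^ n.+1 by rewrite ltn_mod expp_gt0.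
rewrite inordK; last by rewrite prednK // ltn_divLR ?expp_gt0 // -expnS.
have -> : t n %% p ^ n = a %% p ^ n by rewrite /a modn_dvdm ?dvdn_exp2l // ht.
by rewrite addnC -divn_eq.
Qed.

Lemma zp_of_truncK (x : Zp p) : zp_of_trunc p (zp_trunc x) = x.
Proof.
by apply: zp_trunc_inj => n; rewrite zp_trunc_of ?modn_mod //; apply: coherent_trunc.
Qed.

Lemma zp_trunc_add (x y : Zp p) n :
  zp_trunc (zp_add x y) n = (zp_trunc x n + zp_trunc y n) %% p ^ n.
Proof. by rewrite zp_trunc_of //; apply: coherentD; apply: coherent_trunc. Qed.

Lemma zp_trunc_mul (x y : Zp p) n :
  zp_trunc (zp_mul x y) n = (zp_trunc x n * zp_trunc y n) %% p ^ n.
Proof. by rewrite zp_trunc_of //; apply: coherentM; apply: coherent_trunc. Qed.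

Lemma zp_trunc_opp (x : Zp p) n :
  zp_trunc (zp_opp x) n = (p ^ n - zp_trunc x n) %% p ^ n.
Proof.
have trunc_le j : zp_trunc x j <= p ^ j by apply/ltnW/zp_trunc_ltn.
rewrite zp_trunc_of // => k; apply/eqP.
rewrite -(eqn_modDr (zp_trunc x k.+1)) subnK // -modnDmr coherent_trunc modnDmr.
by rewrite subnK // expnS modnMl modnn.
Qed.

Lemma zp_trunc_zp0 n : zp_trunc (zp0 p) n = 0.
Proof. by rewrite /zp_trunc big1. Qed.

Lemma zp_trunc_zp1 n : zp_trunc (zp1 p) n = 1 %% p ^ n.
Proof. exact: zp_trunc_of. Qed.

End ZpTruncations.

(* For p = 0 the digit type is ['I_1], so [Zp 0] is a singleton: this lets the
   ring laws be proved for every p. *)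
Lemma zp_eq p (x y : Zp p) :
  (0 < p -> forall n, zp_trunc x n = zp_trunc y n %[mod p ^ n]) -> x = y.
Proof.
case: p x y => [|p] x y eq_xy; last exact: zp_trunc_inj (eq_xy isT).
by apply/funext => n; apply: val_inj; case: (x n) => [[]] //; case: (y n) => [[]].
Qed.

Section ZpRing.
Variable p : nat.

Lemma zp_addA : associative (@zp_add p).
Proof.
move=> x y z; apply: zp_eq => p_gt0 n.
by rewrite !zp_trunc_add // !modn_mod modnDml modnDmr addnA.
Qed.

Lemma zp_addC : commutative (@zp_add p).
Proof. by move=> x y; apply: zp_eq => p_gt0 n; rewrite !zp_trunc_add // addnC. Qed.

Lemma zp_add0r : left_id (zp0 p) (@zp_add p).
Proof.
by move=> x; apply: zp_eq => p_gt0 n; rewrite zp_trunc_add // zp_trunc_zp0 modn_mod.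
Qed.

Lemma zp_addNr : left_inverse (zp0 p) (@zp_opp p) (@zp_add p).
Proof.
move=> x; apply: zp_eq => p_gt0 n.
have /ltnW x_le := zp_trunc_ltn p_gt0 x n.
by rewrite zp_trunc_add // zp_trunc_opp // zp_trunc_zp0 modn_mod modnDml subnK ?modnn ?mod0n.
Qed.

Lemma zp_mulA : associative (@zp_mul p).
Proof.
move=> x y z; apply: zp_eq => p_gt0 n.
by rewrite !zp_trunc_mul // !modn_mod modnMml modnMmr mulnA.
Qed.

Lemma zp_mulC : commutative (@zp_mul p).
Proof. by move=> x y; apply: zp_eq => p_gt0 n; rewrite !zp_trunc_mul // mulnC. Qed.

Lemma zp_mul1r : left_id (zp1 p) (@zp_mul p).
Proof.
move=> x; apply: zp_eq => p_gt0 n.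
by rewrite zp_trunc_mul // zp_trunc_zp1 // modn_mod modnMml mul1n.
Qed.

Lemma zp_mulDl : left_distributive (@zp_mul p) (@zp_add p).
Proof.
move=> x y z; apply: zp_eq => p_gt0 n.
by rewrite zp_trunc_mul // !zp_trunc_add // !zp_trunc_mul // !modn_mod modnMml modnDm mulnDl.
Qed.

End ZpRing.

HB.instance Definition _ p := gen_eqMixin (Zp p).
HB.instance Definition _ p := gen_choiceMixin (Zp p).
HB.instance Definition _ p :=
  GRing.isZmodule.Build (Zp p) (@zp_addA p) (@zp_addC p) (@zp_add0r p) (@zp_addNr p).
HB.instance Definition _ p :=
  GRing.Zmodule_isComPzRing.Build (Zp p) (@zp_mulA p) (@zp_mulC p) (@zp_mul1r p) (@zp_mulDl p).

Lemma zp_of_trunc0 p : zp_of_trunc p (fun _ => 0) = zp0 p.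
Proof. by apply: zp_eq => p_gt0 n; rewrite zp_trunc_of // zp_trunc_zp0 modn_mod. Qed.

Lemma eq_zp_of_trunc p t t' :
  (forall n, t n = t' n %[mod p ^ n]) -> zp_of_trunc p t = zp_of_trunc p t'.
Proof. by move=> eq_t; apply/funext => n; rewrite /zp_of_trunc /= eq_t. Qed.

Section PowerSeries.
Variable p : nat.
Hypothesis p_gt0 : 0 < p.

Lemma ps_mul_zeta (f : PS p) k :
  ps_mul f (ps_zeta p) k = if k is k'.+1 then f k' else zp0 p.
Proof.
have trunc_zeta j n : zp_trunc (ps_zeta p j) n = if j == 1 then 1 %% p ^ n else 0.
  by rewrite /ps_zeta; case: eqP; rewrite ?zp_trunc_zp1 ?zp_trunc_zp0.
rewrite /ps_mul; case: k => [|k].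
  rewrite -(zp_of_trunc0 p); apply: eq_zp_of_trunc => n.
  by rewrite big_ord1 trunc_zeta muln0.
rewrite -[RHS](zp_of_truncK p_gt0); apply: eq_zp_of_trunc => n.
rewrite 2!big_ord_recr /= subnn subSnn !trunc_zeta /= muln0 addn0.
rewrite -modnDmr modnMmr muln1 modnDmr.
rewrite big1 ?add0n // => i _.
by rewrite trunc_zeta subSn 1?ltnW // eqSS subn_eq0 leqNgt ltn_ord muln0.
Qed.

Lemma ps_const_mul (s c : Zp p) :
  ps_mul (ps_const s) (ps_const c) = ps_const (zp_mul s c).
Proof.
apply/funext => k; rewrite /ps_mul /ps_const; case: k => [|k].
  by apply: eq_zp_of_trunc => n; rewrite big_ord1.
rewrite -[RHS](zp_of_trunc0 p); apply: eq_zp_of_trunc => n.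
rewrite big1 // => i _; case: ifP => [/eqP->|_]; last by rewrite zp_trunc_zp0.
by rewrite subn0 /= zp_trunc_zp0 muln0.
Qed.

End PowerSeries.

Section FreeModule.
Variables p m : nat.
Hypothesis p_gt0 : 0 < p.

Definition constM (c : FreeZp p m) : FreeR p m := fun j => ps_const (c j).
Definition headM (a : FreeR p m) : FreeZp p m := fun j => a j 0.
Definition tailM (a : FreeR p m) : FreeR p m := fun j k => a j k.+1.

Lemma FreeR_ext (a b : FreeR p m) : (forall j k, a j k = b j k) -> a = b.
Proof. by move=> eq_ab; apply/funext => j; apply/funext => k. Qed.

Lemma M_zetaE (a : FreeR p m) j k : M_zeta a j k = if k is k'.+1 then a j k' else zp0 p.
Proof. exact: ps_mul_zeta. Qed.

Lemma M_add0r : left_id (M0 p m) (@M_add p m).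
Proof. by move=> a; apply: FreeR_ext => j k; apply: add0r. Qed.

Lemma M_addr0 : right_id (M0 p m) (@M_add p m).
Proof. by move=> a; apply: FreeR_ext => j k; apply: addr0. Qed.

Lemma V_addr0 : right_id (V0 p m) (@V_add p m).
Proof. by move=> u; apply/funext => j; apply: addr0. Qed.

Lemma M_zeta0 : M_zeta (M0 p m) = M0 p m.
Proof. by apply: FreeR_ext => j k; rewrite M_zetaE; case: k. Qed.

Lemma constM0 : constM (V0 p m) = M0 p m.
Proof. by apply: FreeR_ext => j k; rewrite /constM /ps_const; case: (k == 0). Qed.

Lemma constMD c d : constM (V_add c d) = M_add (constM c) (constM d).
Proof.
apply: FreeR_ext => j k; rewrite /constM /M_add /ps_add /ps_const.
by case: (k == 0); last apply/esym/addr0.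
Qed.

Lemma constMZ s c : constM (V_scale s c) = M_zpscale s (constM c).
Proof. by rewrite /M_zpscale /M_scale /constM; apply/funext => j; rewrite ps_const_mul. Qed.

Lemma M_head_tail a : a = M_add (constM (headM a)) (M_zeta (tailM a)).
Proof.
apply: FreeR_ext => j k; rewrite /M_add /ps_add -/(M_zeta _ j k) M_zetaE.
by case: k => [|k] /=; [apply/esym/addr0 | apply/esym/add0r].
Qed.

Lemma headM_eq0 a : headM a = V0 p m -> a = M_zeta (tailM a).
Proof. by move=> a0; rewrite {1}(M_head_tail a) a0 constM0 M_add0r. Qed.

End FreeModule.

Section SurjectiveEndomorphism.
Local Open Scope ring_scope.

(* A left inverse of a square matrix over a commutative ring is a right inverse. *)
Lemma surj_linear_rV_eq0 (R : comPzRingType) n (f : {linear 'rV[R]_n -> 'rV[R]_n}) :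
  (forall v, exists u, f u = v) -> forall u, f u = 0 -> u = 0.
Proof.
move=> f_surj; have f_surjb v : exists u, f u == v by have [w <-] := f_surj v; exists w.
pose g i := xchoose (f_surjb (delta_mx 0 i)).
have BA1 : \matrix_i g i *m lin1_mx f = 1%:M.
  apply/row_matrixP => i.
  by rewrite row_mul rowK mul_rV_lin1 (eqP (xchooseP (f_surjb _))) row1.
by move=> u fu0; rewrite -[u]mulmx1 -(mulmx1C BA1) mulmxA mul_rV_lin1 fu0 mul0mx.
Qed.

End SurjectiveEndomorphism.

Section ConstantTerm.
Variables (p m : nat) (phi : FreeR p m -> FreeZp p m).
Hypothesis p_gt0 : 0 < p.
Hypothesis phiD : forall a b, phi (M_add a b) = V_add (phi a) (phi b).
Hypothesis phiZ : forall c a, phi (M_zpscale c a) = V_scale c (phi a).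
Hypothesis phi_surj : forall v, exists a, phi a = v.
Hypothesis phi_zeta : forall b, phi (M_zeta b) = V0 p m.

Definition rowV (c : FreeZp p m) : 'rV[Zp p]_m := \row_j c j.

Definition vecR (u : 'rV[Zp p]_m) : FreeZp p m := fun j => u ord0 j.

Lemma rowVK : cancel rowV vecR.
Proof. by move=> c; apply/funext => j; rewrite /vecR mxE. Qed.

Lemma vecRK : cancel vecR rowV.
Proof. by move=> u; apply/rowP => j; rewrite mxE. Qed.

Definition phi_const (u : 'rV[Zp p]_m) : 'rV[Zp p]_m := rowV (phi (constM (vecR u))).

Fact phi_const_linear : linear phi_const.
Proof.
move=> s u v; apply/rowP => i; rewrite /phi_const !mxE.
have -> : vecR (s *: u + v)%R = V_add (V_scale s (vecR u)) (vecR v).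
  by apply/funext => j; rewrite /vecR !mxE.
by rewrite constMD constMZ phiD phiZ.
Qed.

HB.instance Definition _ := GRing.isLinear.Build (Zp p) _ _ _ phi_const phi_const_linear.

Lemma phi_headM a : phi a = phi (constM (headM a)).
Proof. by rewrite {1}(M_head_tail p_gt0 a) phiD phi_zeta V_addr0. Qed.

Lemma phi_const_surj v : exists u, phi_const u = v.
Proof.
have [a phia] := phi_surj (vecR v).
by exists (rowV (headM a)); rewrite /phi_const rowVK -phi_headM phia vecRK.
Qed.

Lemma phi_const_eq0 c : phi (constM c) = V0 p m -> c = V0 p m.
Proof.
move=> phic0; have rowc0 : rowV c = 0%R.
  apply: (surj_linear_rV_eq0 phi_const_surj).
  by rewrite /= /phi_const rowVK phic0; apply/rowP => j; rewrite !mxE.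
by rewrite -[c]rowVK rowc0; apply/funext => j; rewrite /vecR mxE.
Qed.

End ConstantTerm.

Lemma quotient_iso_headM_eq0 p m (K : FreeR p m -> Prop) :
  0 < p -> K (M0 p m) -> quotient_iso_Zpm K -> forall a, K a -> headM a = V0 p m.
Proof.
move=> p_gt0 K0 [phi [phiD phiZ phi_surj phi_ker]] a Ka.
have phi_zeta b : phi (M_zeta b) = V0 p m.
  by apply/phi_ker; exists (M0 p m), b; rewrite M_add0r.
apply: (phi_const_eq0 p_gt0 phiD phiZ phi_surj phi_zeta).
rewrite -(phi_headM p_gt0 phiD phi_zeta); apply/phi_ker; exists a, (M0 p m).
by rewrite (M_zeta0 _ p_gt0) M_addr0.
Qed.

(* The k-th coefficient of a is the constant term of the k-fold zeta-quotient
   of a, which stays in K. *)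
Lemma zeta_saturated_eq0 p m (K : FreeR p m -> Prop) : 0 < p ->
  (forall a, K a -> headM a = V0 p m) -> (forall a, K (M_zeta a) -> K a) ->
  forall a, K a -> a = M0 p m.
Proof.
move=> p_gt0 head0 zeta_div.
suff coef0 k a : K a -> forall j, a j k = zp0 p.
  by move=> a Ka; apply: FreeR_ext => j k; apply: coef0.
elim: k a => [|k IHk] a Ka j; first exact: (congr1 (fun c => c j) (head0 a Ka)).
apply: (IHk (tailM a)); apply: zeta_div.
by rewrite -(headM_eq0 p_gt0 (head0 a Ka)).
Qed.

Theorem lemma5 (p m : nat) (hp : prime p) (hm : 0 < m)
  (K : FreeR p m -> Prop) (hK : is_Rsubmodule K)
  (h1 : quotient_iso_Zpm K)
  (h2 : forall a : FreeR p m, K (M_zeta a) -> K a) :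
  forall a : FreeR p m, K a -> a = M0 p m.
Proof.
have p_gt0 := prime_gt0 hp; case: hK => K0 _ _.
exact: zeta_saturated_eq0 p_gt0 (quotient_iso_headM_eq0 p_gt0 K0 h1) h2.
Qed.
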